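(* Let $n\ge 2$. Then there exists a non-convex domain $D\subset\mathbb{C}^n$ such that $A(D)$ is pseudoconvex for every real isometry $A$ of $\mathbb{C}^n=\mathbb{R}^{2n}$. *)

From mathcomp Require Import ssreflect ssrfun ssrbool eqtype ssrnat seq choice fintype.
From Stdlib Require Import Reals.
From Coquelicot Require Import Coquelicot.

Set Implicit Arguments.
Unset Strict Implicit.

Local Open Scope R_scope.

Definition Cn (n : nat) : Type := 'I_n -> C.

Definition cn_dist (n : nat) (z w : Cn n) : R :=
  sqrt (foldr Rplus 0 (map (fun j => (Cmod (Cminus (z j) (w j))) ^ 2) (enum 'I_n))).

Definition cn_add (n : nat) (z w : Cn n) : Cn n := fun j => Cplus (z j) (w j).
Definition cn_cscale (n : nat) (l : C) (z : Cn n) : Cn n := fun j => Cmult l (z j).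
Definition cn_rscale (n : nat) (t : R) (z : Cn n) : Cn n := fun j => Cmult (RtoC t) (z j).
Definition cn_zero (n : nat) : Cn n := fun _ => RtoC 0.

Definition cn_open (n : nat) (D : Cn n -> Prop) : Prop :=
  forall z, D z -> exists eps, 0 < eps /\ forall w, cn_dist z w < eps -> D w.

Definition cn_closed (n : nat) (K : Cn n -> Prop) : Prop :=
  cn_open (fun z => ~ K z).

Definition cn_bounded (n : nat) (K : Cn n -> Prop) : Prop :=
  exists r, forall z, K z -> cn_dist (@cn_zero n) z <= r.

Definition cn_connected (n : nat) (D : Cn n -> Prop) : Prop :=
  forall U V : Cn n -> Prop, cn_open U -> cn_open V ->
    (forall z, D z -> U z \/ V z) ->
    (forall z, D z -> U z -> V z -> False) ->
    (exists z, D z /\ U z) -> (exists z, D z /\ V z) -> False.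

Definition cn_domain (n : nat) (D : Cn n -> Prop) : Prop :=
  (exists z, D z) /\ cn_open D /\ cn_connected D.

Definition cn_convex (n : nat) (D : Cn n -> Prop) : Prop :=
  forall z w t, D z -> D w -> 0 <= t <= 1 ->
    D (cn_add (cn_rscale (1 - t) z) (cn_rscale t w)).

Definition real_isometry (n : nat) (A : Cn n -> Cn n) : Prop :=
  forall z w, cn_dist (A z) (A w) = cn_dist z w.

Definition cn_image (n : nat) (A : Cn n -> Cn n) (D : Cn n -> Prop) : Cn n -> Prop :=
  fun w => exists z, D z /\ w = A z.

Definition cn_continuous_on (n : nat) (D : Cn n -> Prop) (u : Cn n -> R) : Prop :=
  forall z, D z -> forall eps, 0 < eps -> exists delta, 0 < delta /\
    forall w, D w -> cn_dist z w < delta -> Rabs (u w - u z) < eps.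

Definition circle_pt (n : nat) (a b : Cn n) (theta : R) : Cn n :=
  cn_add a (cn_cscale (cos theta, sin theta) b).

Definition cont_psh_on (n : nat) (D : Cn n -> Prop) (u : Cn n -> R) : Prop :=
  cn_continuous_on D u /\
  forall a b : Cn n,
    (forall l : C, Cmod l <= 1 -> D (cn_add a (cn_cscale l b))) ->
    u a <= / (2 * PI) * RInt (fun theta => u (circle_pt a b theta)) 0 (2 * PI).

(* exhaustion function: every sublevel set is relatively compact in D *)
Definition exhaustion_on (n : nat) (D : Cn n -> Prop) (u : Cn n -> R) : Prop :=
  forall c : R, exists K : Cn n -> Prop,
    cn_closed K /\ cn_bounded K /\ (forall z, K z -> D z) /\
    (forall z, D z -> u z < c -> K z).

Definition pseudoconvex (n : nat) (D : Cn n -> Prop) : Prop :=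
  exists u : Cn n -> R, cont_psh_on D u /\ exhaustion_on D u.

(* The domain is D = { y : rho(0, e_1; y) < 1 } with
   rho(P, Q; y) = 3 |y - P|^2 - 4 <y - P, Q - P>^2, i.e. 3 |y|^2 - 4 (Re y_1)^2 < 1.
   It is star-shaped about 0, hence connected, and not convex: it contains
   2 e_1 + e_2 and -2 e_1 + e_2 but not e_2.
   Since rho is expressed through distances alone, every isometry A carries D into
   { rho(A 0, A e_1; .) < 1 }, and u = 1 / (1 - rho(P, Q; .)) + |. - P|^2 is an
   exhaustion of A(D) for P = A 0, Q = A e_1.  Along a circle a + e^{it} b, rho is a
   trigonometric polynomial whose mean exceeds rho(a) by
   3 |b|^2 - 2 (<b, Q - P>^2 + <i b, Q - P>^2) >= |b|^2 >= 0 when |Q - P| = 1;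
   the tangent line of the convex function T |-> 1 / (1 - T) at rho(a) then yields
   the sub-mean value inequality for u.  The sublevel sets of u are images under A
   of closed bounded subsets of D, which are closed because C^n is complete. *)

Set Warnings "-notation-overridden -ambiguous-paths".
From mathcomp Require Import ssreflect ssrfun ssrbool eqtype ssrnat seq choice fintype.
From Stdlib Require Import Reals Lra Psatz Classical ClassicalEpsilon FunctionalExtensionality.
From Coquelicot Require Import Coquelicot.

Set Implicit Arguments.
Unset Strict Implicit.
Local Open Scope R_scope.

Section RealSums.
Variable T : Type.
Implicit Types (l : seq T) (f g : T -> R).

Definition sumR l f : R := foldr Rplus 0 (map f l).

Lemma sumR_cons a l f : sumR (a :: l) f = f a + sumR l f.
Proof. by []. Qed.

Lemma sumR_ext l f g : f =1 g -> sumR l f = sumR l g.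
Proof. by move=> efg; rewrite /sumR (eq_map efg). Qed.

Lemma sumR_add l f g : sumR l (fun j => f j + g j) = sumR l f + sumR l g.
Proof. by elim: l => [|a l IH]; rewrite ?sumR_cons ?IH /sumR /=; ring. Qed.

Lemma sumR_mull l k f : sumR l (fun j => k * f j) = k * sumR l f.
Proof. by elim: l => [|a l IH]; rewrite ?sumR_cons ?IH /sumR /=; ring. Qed.

Lemma sumR_opp l f : sumR l (fun j => - f j) = - sumR l f.
Proof. by elim: l => [|a l IH]; rewrite ?sumR_cons ?IH /sumR /=; ring. Qed.

Lemma sumR_0 l : sumR l (fun _ => 0) = 0.
Proof. by elim: l => [|a l IH]; rewrite ?sumR_cons ?IH /sumR /=; ring. Qed.

Lemma sumR_ge0 l f : (forall j, 0 <= f j) -> 0 <= sumR l f.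
Proof.
move=> f_ge0; elim: l => [|a l IH]; first by rewrite /sumR /=; lra.
by rewrite sumR_cons; have := f_ge0 a; lra.
Qed.

Lemma cauchy_schwarz_step X Y x y B E b e :
  0 <= B -> 0 <= E -> 0 <= b -> 0 <= e ->
  X ^ 2 + Y ^ 2 <= B * E -> x ^ 2 + y ^ 2 <= b * e ->
  (X + x) ^ 2 + (Y + y) ^ 2 <= (B + b) * (E + e).
Proof.
move=> hB hE hb he h1 h2.
have cross_sq : (X * x + Y * y) ^ 2 <= (B * e) * (b * E).
  have lagrange : (X ^ 2 + Y ^ 2) * (x ^ 2 + y ^ 2) - (X * x + Y * y) ^ 2
                  = (X * y - Y * x) ^ 2 by ring.
  have := pow2_ge_0 (X * y - Y * x).
  have : (X ^ 2 + Y ^ 2) * (x ^ 2 + y ^ 2) <= (B * E) * (b * e)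
    by apply: Rmult_le_compat; nra.
  nra.
have cross : 2 * (X * x + Y * y) <= B * e + b * E.
  apply: Rsqr_incr_0_var; last by nra.
  rewrite /Rsqr; have := pow2_ge_0 (B * e - b * E); nra.
nra.
Qed.

Lemma sumR_cauchy_schwarz l (x y B E : T -> R) :
  (forall j, 0 <= B j) -> (forall j, 0 <= E j) ->
  (forall j, x j ^ 2 + y j ^ 2 <= B j * E j) ->
  sumR l x ^ 2 + sumR l y ^ 2 <= sumR l B * sumR l E.
Proof.
move=> hB hE hxy; elim: l => [|a l IH]; first by rewrite /sumR /=; lra.
rewrite !sumR_cons (Rplus_comm (x a)) (Rplus_comm (y a)) (Rplus_comm (B a)) (Rplus_comm (E a)).
exact: cauchy_schwarz_step (sumR_ge0 l hB) (sumR_ge0 l hE) (hB a) (hE a) IH (hxy a).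
Qed.

End RealSums.

Section RealSumsEq.
Variable T : eqType.
Implicit Types (l : seq T) (f : T -> R).

Lemma sumR_ge_term l f j : (forall k, 0 <= f k) -> j \in l -> f j <= sumR l f.
Proof.
move=> f_ge0; elim: l => [|a l IH] //; rewrite sumR_cons inE => /orP[/eqP->|jl].
- by have := sumR_ge0 l f_ge0; lra.
- by have := IH jl; have := f_ge0 a; lra.
Qed.

Lemma sumR_delta l i v : uniq l ->
  sumR l (fun j => if j == i then v else 0) = if i \in l then v else 0.
Proof.
elim: l => [|a l IH] //= /andP[al ul]; rewrite sumR_cons IH // inE.
by case: (eqVneq a i) => [<-|_] /=; rewrite ?(negbTE al); lra.
Qed.

End RealSumsEq.

Section Euclid.
Variable n : nat.
Implicit Types x y z w P Q : Cn n.

Definition sum_ord (f : 'I_n -> R) : R := sumR (enum 'I_n) f.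

Definition sqdist_at z w j :=
  (fst (z j) - fst (w j)) ^ 2 + (snd (z j) - snd (w j)) ^ 2.

Definition sqdist z w : R := sum_ord (sqdist_at z w).

Definition inner z P w Q : R :=
  sum_ord (fun j => (fst (z j) - fst (P j)) * (fst (w j) - fst (Q j))
                  + (snd (z j) - snd (P j)) * (snd (w j) - snd (Q j))).

Lemma sqdist_at_ge0 z w j : 0 <= sqdist_at z w j.
Proof.
rewrite /sqdist_at.
by have := pow2_ge_0 (fst (z j) - fst (w j)); have := pow2_ge_0 (snd (z j) - snd (w j)); lra.
Qed.

Lemma sqdist_ge0 z w : 0 <= sqdist z w.
Proof. exact: sumR_ge0 (sqdist_at_ge0 z w). Qed.

Lemma cn_dist_sqdist z w : cn_dist z w = sqrt (sqdist z w).
Proof.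
rewrite /cn_dist /sqdist /sum_ord /sumR; congr (sqrt (foldr _ _ _)); apply: eq_map => j.
rewrite /Cmod pow2_sqrt /sqdist_at /=; first ring.
by rewrite !Rmult_1_r; apply: Rplus_le_le_0_compat; apply: Rle_0_sqr.
Qed.

Lemma sqdist_cn_dist z w : sqdist z w = cn_dist z w ^ 2.
Proof. by rewrite cn_dist_sqdist pow2_sqrt //; apply: sqdist_ge0. Qed.

Lemma cn_dist_ge0 z w : 0 <= cn_dist z w.
Proof. by rewrite cn_dist_sqdist; apply: sqrt_pos. Qed.

Lemma cn_dist_sym z w : cn_dist z w = cn_dist w z.
Proof. by rewrite !cn_dist_sqdist; congr sqrt; apply: sumR_ext => j; rewrite /sqdist_at; ring. Qed.

Lemma inner_polar z w P : 2 * inner z P w P = sqdist z P + sqdist w P - sqdist z w.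
Proof.
rewrite /inner /sqdist /sum_ord /Rminus -sumR_mull -sumR_opp -!sumR_add.
by apply: sumR_ext => j; rewrite /sqdist_at; ring.
Qed.

Lemma inner_cauchy_schwarz z P w Q : inner z P w Q ^ 2 <= sqdist z P * sqdist w Q.
Proof.
have sum0 : sumR (enum 'I_n) (fun _ => 0) ^ 2 = 0 by rewrite sumR_0; ring.
rewrite /inner /sqdist /sum_ord -[X in X <= _]Rplus_0_r -sum0.
apply: sumR_cauchy_schwarz => [j|j|j]; try exact: sqdist_at_ge0.
rewrite /sqdist_at.
have := pow2_ge_0 ((fst (z j) - fst (P j)) * (snd (w j) - snd (Q j))
                   - (snd (z j) - snd (P j)) * (fst (w j) - fst (Q j))).
nra.
Qed.

Lemma cn_dist_triangle x y z : cn_dist x z <= cn_dist x y + cn_dist y z.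
Proof.
have expand : sqdist x z = sqdist x y + sqdist y z + 2 * inner x y y z.
  rewrite /inner /sqdist /sum_ord -sumR_mull -!sumR_add.
  by apply: sumR_ext => j; rewrite /sqdist_at; ring.
have cs := inner_cauchy_schwarz x y y z.
rewrite !sqdist_cn_dist in expand cs.
have := cn_dist_ge0 x y; have := cn_dist_ge0 y z; have := cn_dist_ge0 x z => ? ? ?.
have : inner x y y z <= cn_dist x y * cn_dist y z.
  by apply: Rsqr_incr_0_var; rewrite /Rsqr; nra.
by move=> ?; apply: Rsqr_incr_0_var; rewrite /Rsqr; nra.
Qed.

Lemma isometry_sqdist A : real_isometry A -> forall z w, sqdist (A z) (A w) = sqdist z w.
Proof. by move=> isoA z w; rewrite !sqdist_cn_dist isoA. Qed.

Lemma isometry_inner A : real_isometry A ->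
  forall z w P, inner (A z) (A P) (A w) (A P) = inner z P w P.
Proof.
move=> isoA z w P; have := inner_polar (A z) (A w) (A P); have := inner_polar z w P.
by rewrite !(isometry_sqdist isoA); lra.
Qed.

Definition rho P Q y : R := 3 * sqdist y P - 4 * inner y P Q P ^ 2.

Definition rho_domain P Q : Cn n -> Prop := fun y => rho P Q y < 1.

Definition exhaust P Q y : R := / (1 - rho P Q y) + sqdist y P.

Lemma isometry_rho A : real_isometry A -> forall P Q y, rho (A P) (A Q) (A y) = rho P Q y.
Proof. by move=> isoA P Q y; rewrite /rho (isometry_sqdist isoA) (isometry_inner isoA). Qed.

End Euclid.

Lemma is_RInt_circle_quadratic k0 k1 k2 k e u v :
  is_RInt (fun t => k0 + k1 * cos t + k2 * sin t + k * (e + u * cos t + v * sin t) ^ 2)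
    0 (2 * PI) (2 * PI * (k0 + k * (e ^ 2 + (u ^ 2 + v ^ 2) / 2))).
Proof.
pose F t := k0 * t + k1 * sin t - k2 * cos t
  + k * (e ^ 2 * t + 2 * e * u * sin t - 2 * e * v * cos t + u * v * sin t ^ 2
         + u ^ 2 * (t / 2 + sin t * cos t / 2) + v ^ 2 * (t / 2 - sin t * cos t / 2)).
have dF t : is_derive F t (k0 + k1 * cos t + k2 * sin t + k * (e + u * cos t + v * sin t) ^ 2).
  rewrite /F; auto_derive => //; change RinvImpl.Rinv with Rinv.
  have pythagoras := sin2_cos2 t; rewrite /Rsqr in pythagoras.
  apply: Rminus_diag_uniq.
  transitivity (k * (u ^ 2 + v ^ 2) * (1 - (sin t * sin t + cos t * cos t)) / 2); first field.
  by rewrite pythagoras; field.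
have cont t : continuous
    (fun t => k0 + k1 * cos t + k2 * sin t + k * (e + u * cos t + v * sin t) ^ 2) t
  by apply: ex_derive_continuous; auto_derive.
have := is_RInt_derive F _ 0 (2 * PI) (fun t _ => dF t) (fun t _ => cont t).
suff -> : minus (F (2 * PI)) (F 0) = 2 * PI * (k0 + k * (e ^ 2 + (u ^ 2 + v ^ 2) / 2)) by [].
by rewrite /minus /plus /opp /= /F sin_2PI cos_2PI sin_0 cos_0; field.
Qed.

Lemma mean_ge_of_minorant (f L : R -> R) c :
  (forall t, L t <= f t) -> is_RInt L 0 (2 * PI) (2 * PI * c) -> ex_RInt f 0 (2 * PI) ->
  c <= / (2 * PI) * RInt f 0 (2 * PI).
Proof.
move=> Lf intL intf; have pi_gt0 := PI_RGT_0.
have : 2 * PI * c <= RInt f 0 (2 * PI).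
  rewrite -(is_RInt_unique _ _ _ _ intL).
  by apply: RInt_le => [|||t _]; [lra | exists (2 * PI * c) | |].
move=> le_int; apply: (Rmult_le_reg_l (2 * PI)); first lra.
by rewrite -Rmult_assoc Rinv_r ?Rmult_1_l //; lra.
Qed.

Lemma inv_one_minus_tangent T m : T < 1 -> m < 1 ->
  / (1 - m) + / (1 - m) ^ 2 * (T - m) <= / (1 - T).
Proof.
move=> hT hm; have ha : 0 < 1 - T by lra; have hb : 0 < 1 - m by lra.
have -> : / (1 - m) + / (1 - m) ^ 2 * (T - m) = (2 * (1 - m) - (1 - T)) / (1 - m) ^ 2
  by field; lra.
apply: (Rmult_le_reg_r ((1 - m) ^ 2 * (1 - T))); first by apply: Rmult_lt_0_compat; nra.
have -> : / (1 - T) * ((1 - m) ^ 2 * (1 - T)) = (1 - m) ^ 2 by field; lra.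
have -> : (2 * (1 - m) - (1 - T)) / (1 - m) ^ 2 * ((1 - m) ^ 2 * (1 - T))
          = (2 * (1 - m) - (1 - T)) * (1 - T) by field; lra.
by have := pow2_ge_0 (T - m); nra.
Qed.

Section CircleMeans.
Variable n : nat.
Implicit Types a b P Q : Cn n.
Local Notation cO := (@cn_zero n).
Local Notation ib b := (cn_cscale Ci b).

Lemma sqdist_circle a b P t :
  sqdist (circle_pt a b t) P = sqdist a P + sqdist b cO
    + 2 * cos t * inner a P b cO + 2 * sin t * inner a P (ib b) cO.
Proof.
rewrite /sqdist /inner /sum_ord -!sumR_mull -!sumR_add; apply: sumR_ext => j.
rewrite /sqdist_at /circle_pt /cn_add /cn_cscale /cn_zero /=.
have pythagoras := sin2_cos2 t; rewrite /Rsqr in pythagoras.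
apply: Rminus_diag_uniq.
transitivity ((fst (b j) ^ 2 + snd (b j) ^ 2) * (sin t * sin t + cos t * cos t - 1));
  [ring | by rewrite pythagoras; ring].
Qed.

Lemma inner_circle a b P Q t :
  inner (circle_pt a b t) P Q P
  = inner a P Q P + cos t * inner b cO Q P + sin t * inner (ib b) cO Q P.
Proof.
rewrite /inner /sum_ord -!sumR_mull -!sumR_add; apply: sumR_ext => j.
by rewrite /circle_pt /cn_add /cn_cscale /cn_zero /=; ring.
Qed.

(* b and i b are orthogonal of the same length, hence Bessel's inequality. *)
Lemma inner_rot_bessel b P Q :
  inner b cO Q P ^ 2 + inner (ib b) cO Q P ^ 2 <= sqdist b cO * sqdist Q P.
Proof.
apply: sumR_cauchy_schwarz => j; try exact: sqdist_at_ge0.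
by apply: Req_le; rewrite /sqdist_at /cn_cscale /cn_zero /=; ring.
Qed.

Lemma exhaust_submean P Q a b :
  sqdist Q P = 1 -> (forall t, rho P Q (circle_pt a b t) < 1) -> rho P Q a < 1 ->
  exhaust P Q a <= / (2 * PI) * RInt (fun t => exhaust P Q (circle_pt a b t)) 0 (2 * PI).
Proof.
move=> QP1 rho_circ rho_a.
set W := sqdist a P; set B := sqdist b cO; set X := inner a P b cO.
set Y := inner a P (ib b) cO; set E := inner a P Q P.
set be := inner b cO Q P; set ga := inner (ib b) cO Q P; set m := rho P Q a in rho_a *.
pose S t := W + B + 2 * cos t * X + 2 * sin t * Y.
pose Tr t := 3 * S t - 4 * (E + cos t * be + sin t * ga) ^ 2.
have rho_Tr t : rho P Q (circle_pt a b t) = Tr t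
  by rewrite /rho sqdist_circle inner_circle.
have exhaust_circ t : exhaust P Q (circle_pt a b t) = / (1 - Tr t) + S t
  by rewrite /exhaust rho_Tr sqdist_circle.
set r := / (1 - m); set q := / (1 - m) ^ 2.
have q_gt0 : 0 < q by rewrite /q; apply: Rinv_0_lt_compat; apply: pow_lt; lra.
(* [c] is the circle mean of the tangent minorant [L] of the exhaustion. *)
pose c := r + q * (3 * B - 2 * (be ^ 2 + ga ^ 2)) + W + B.
pose L t := r + q * (Tr t - m) + S t.
have le_c : exhaust P Q a <= c.
  have := inner_rot_bessel b P Q; rewrite QP1 -/be -/ga -/B Rmult_1_r => bessel.
  have := sqdist_ge0 b cO; rewrite -/B => B_ge0.
  have : 0 <= q * (3 * B - 2 * (be ^ 2 + ga ^ 2)) by apply: Rmult_le_pos; lra.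
  by rewrite /c /exhaust -/m -/r -/W; lra.
apply: (Rle_trans _ _ _ le_c); apply: (mean_ge_of_minorant (L := L)).
- move=> t; rewrite exhaust_circ /L.
  have Tr_lt1 : Tr t < 1 by rewrite -rho_Tr.
  by have := inv_one_minus_tangent Tr_lt1 rho_a; rewrite -/r -/q; lra.
- have L_expand t : L t = r - q * m + (3 * q + 1) * (W + B)
      + (3 * q + 1) * (2 * X) * cos t + (3 * q + 1) * (2 * Y) * sin t
      + (- 4 * q) * (E + be * cos t + ga * sin t) ^ 2 by rewrite /L /Tr /S; ring.
  apply: is_RInt_ext => [t _|]; first exact: esym (L_expand t).
  have -> : 2 * PI * c = 2 * PI * (r - q * m + (3 * q + 1) * (W + B)
      + (- 4 * q) * (E ^ 2 + (be ^ 2 + ga ^ 2) / 2)) by rewrite /c /m /rho -/W -/E; field.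
  exact: is_RInt_circle_quadratic.
- apply: (ex_RInt_ext (fun t => / (1 - Tr t) + S t)) => [t _|]; first by rewrite exhaust_circ.
  apply: ex_RInt_continuous => t _; apply: ex_derive_continuous.
  by rewrite /Tr /S; auto_derive; have := rho_circ t; rewrite rho_Tr /Tr /S; lra.
Qed.

End CircleMeans.

Section Continuity.
Variable n : nat.
Implicit Types y w P Q : Cn n.

Definition cn_continuous_at (f : Cn n -> R) y := forall eps, 0 < eps ->
  exists delta, 0 < delta /\ forall w, cn_dist y w < delta -> Rabs (f w - f y) < eps.

Lemma cn_continuous_comp (phi : R -> R) f y :
  continuous phi (f y) -> cn_continuous_at f y -> cn_continuous_at (fun w => phi (f w)) y.
Proof.
move=> phi_cont f_cont eps eps_gt0.
have [alpha [alpha_gt0 near_phi]] := proj2 (continuity_pt_filterlim _ _) phi_cont eps eps_gt0.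
have [delta [delta_gt0 near_f]] := f_cont alpha alpha_gt0.
exists delta; split => // w yw.
case: (Req_dec (f w) (f y)) => [->|fwy]; first by rewrite Rminus_eq_0 Rabs_R0.
by apply: near_phi; split; [split => //; auto | exact: near_f].
Qed.

Lemma cn_continuous_add f g y :
  cn_continuous_at f y -> cn_continuous_at g y -> cn_continuous_at (fun w => f w + g w) y.
Proof.
move=> f_cont g_cont eps eps_gt0.
have [d1 [d1_gt0 near_f]] := f_cont (eps / 2) ltac:(lra).
have [d2 [d2_gt0 near_g]] := g_cont (eps / 2) ltac:(lra).
exists (Rmin d1 d2); split; first exact: Rmin_pos.
move=> w yw; have := near_f w (Rlt_le_trans _ _ _ yw (Rmin_l _ _)).
have := near_g w (Rlt_le_trans _ _ _ yw (Rmin_r _ _)).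
have := Rabs_triang (f w - f y) (g w - g y).
have -> : f w - f y + (g w - g y) = f w + g w - (f y + g y) by ring.
lra.
Qed.

Lemma cn_continuous_dist P y : cn_continuous_at (fun w => cn_dist w P) y.
Proof.
move=> eps eps_gt0; exists eps; split => // w yw.
have := cn_dist_triangle w y P; have := cn_dist_triangle y w P.
by rewrite (cn_dist_sym w y) => *; apply: Rabs_def1; lra.
Qed.

Lemma rho_cn_dist P Q y : rho P Q y =
  3 * cn_dist y P ^ 2 - 4 * ((cn_dist y P ^ 2 + sqdist Q P - cn_dist y Q ^ 2) / 2) ^ 2.
Proof.
rewrite /rho -!sqdist_cn_dist; have polar := inner_polar y Q P.
by have -> : inner y P Q P = (sqdist y P + sqdist Q P - sqdist y Q) / 2 by lra.
Qed.

Lemma cn_continuous_rho P Q y : cn_continuous_at (rho P Q) y.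
Proof.
have -> : rho P Q = fun w => 3 * cn_dist w P ^ 2
    + - 4 * ((cn_dist w P ^ 2 + sqdist Q P) / 2 + - cn_dist w Q ^ 2 / 2) ^ 2.
  by apply: functional_extensionality => w; rewrite rho_cn_dist; field.
apply: (cn_continuous_add (f := fun w => 3 * cn_dist w P ^ 2)).
  apply: (cn_continuous_comp (phi := fun s => 3 * s ^ 2)); last exact: cn_continuous_dist.
  by apply: ex_derive_continuous; auto_derive.
apply: (cn_continuous_comp (phi := fun s => - 4 * s ^ 2)).
  by apply: ex_derive_continuous; auto_derive.
apply: (cn_continuous_add (f := fun w => (cn_dist w P ^ 2 + sqdist Q P) / 2)).
  apply: (cn_continuous_comp (phi := fun s => (s ^ 2 + sqdist Q P) / 2)).
    by apply: ex_derive_continuous; auto_derive.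
  exact: cn_continuous_dist.
apply: (cn_continuous_comp (phi := fun s => - s ^ 2 / 2)); last exact: cn_continuous_dist.
by apply: ex_derive_continuous; auto_derive.
Qed.

Lemma cn_continuous_exhaust P Q y : rho P Q y < 1 -> cn_continuous_at (exhaust P Q) y.
Proof.
move=> rho_y.
have -> : exhaust P Q = fun w => / (1 - rho P Q w) + cn_dist w P ^ 2
  by apply: functional_extensionality => w; rewrite /exhaust sqdist_cn_dist.
apply: (cn_continuous_add (f := fun w => / (1 - rho P Q w))).
  apply: (cn_continuous_comp (phi := fun s => / (1 - s))); last exact: cn_continuous_rho.
  by apply: ex_derive_continuous; auto_derive; lra.
apply: (cn_continuous_comp (phi := fun s => s ^ 2)); last exact: cn_continuous_dist.
by apply: ex_derive_continuous; auto_derive.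
Qed.

Lemma Cmod_cis t : Cmod (cos t, sin t) = 1.
Proof.
rewrite /Cmod /= !Rmult_1_r; have := sin2_cos2 t; rewrite /Rsqr Rplus_comm => ->.
exact: sqrt_1.
Qed.

Lemma exhaust_cont_psh P Q (E : Cn n -> Prop) :
  sqdist Q P = 1 -> (forall y, E y -> rho P Q y < 1) -> cont_psh_on E (exhaust P Q).
Proof.
move=> QP1 E_rho; split.
  move=> y Ey eps eps_gt0.
  have [delta [delta_gt0 near_y]] := cn_continuous_exhaust (E_rho y Ey) eps_gt0.
  by exists delta; split => // w _; apply: near_y.
move=> a b disc; apply: exhaust_submean => // [t|].
  by apply/E_rho/disc; rewrite Cmod_cis; lra.
have center : cn_add a (cn_cscale (RtoC 0) b) = a.
  apply: functional_extensionality => j; rewrite /cn_add /cn_cscale /Cplus /Cmult /=.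
  by apply: injective_projections => /=; ring.
by rewrite -center; apply/E_rho/disc; rewrite Cmod_0; lra.
Qed.

End Continuity.

Lemma initial_segment_sup (Pp : R -> Prop) : Pp 0 -> exists m, 0 <= m <= 1 /\
  (forall s, 0 <= s < m -> Pp s) /\
  (forall t, t <= 1 -> (forall s, 0 <= s <= t -> Pp s) -> t <= m).
Proof.
move=> P0; pose E t := 0 <= t <= 1 /\ forall s, 0 <= s <= t -> Pp s.
have E0 : E 0 by split => [|s s0]; [lra | have -> : s = 0 by lra].
have E_bound : bound E by exists 1 => t [t01 _]; lra.
have [m [m_ub m_lub]] := completeness E E_bound (ex_intro _ 0 E0).
have m_ge0 : 0 <= m by apply: m_ub.
have m_le1 : m <= 1 by apply: m_lub => t [t01 _]; lra.
exists m; split; [lra | split].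
- move=> s s_m; apply: NNPP => not_Ps.
  suff : m <= s by lra.
  apply: m_lub => t [t01 Pt]; apply: Rnot_lt_le => st.
  by apply: not_Ps; apply: Pt; lra.
- move=> t t1 Pt; case: (Rle_lt_dec 0 t) => t0; last lra.
  by apply: m_ub; split; [lra | exact: Pt].
Qed.

Lemma unit_interval_connected (Pp Qq : R -> Prop) :
  (forall t, 0 <= t <= 1 -> Pp t \/ Qq t) ->
  (forall t, 0 <= t <= 1 -> Pp t -> Qq t -> False) ->
  (forall t, 0 <= t <= 1 -> Pp t ->
     exists d, 0 < d /\ forall s, 0 <= s <= 1 -> Rabs (s - t) < d -> Pp s) ->
  (forall t, 0 <= t <= 1 -> Qq t ->
     exists d, 0 < d /\ forall s, 0 <= s <= 1 -> Rabs (s - t) < d -> Qq s) ->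
  Pp 0 -> Qq 1 -> False.
Proof.
move=> cover disj P_open Q_open P0 Q1.
have [m [m01 [P_below m_max]]] := initial_segment_sup P0.
case: (cover m m01) => [Pm|Qm].
- have [d [d_gt0 P_near]] := P_open m m01 Pm.
  case: (Rlt_le_dec m 1) => [m_lt1|m_ge1]; last first.
    have m1 : m = 1 by lra.
    by apply: (disj 1); [lra | rewrite -m1 | ].
  have : Rmin (m + d / 2) 1 <= m.
    apply: m_max => [|s s_t]; first exact: Rmin_r.
    have := Rmin_l (m + d / 2) 1; have := Rmin_r (m + d / 2) 1 => ? ?.
    case: (Rlt_le_dec s m) => [s_m|m_s]; first by apply: P_below; lra.
    by apply: P_near; [lra | rewrite Rabs_right; lra].
  have : m < Rmin (m + d / 2) 1 by apply: Rmin_glb_lt; lra.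
  lra.
- have m_gt0 : 0 < m.
    case: (Rle_lt_dec m 0) => [m_le0|//]; have m0 : m = 0 by lra.
    by exfalso; apply: (disj 0); [lra | | rewrite -m0].
  have [d [d_gt0 Q_near]] := Q_open m m01 Qm.
  pose s := Rmax (m - d / 2) 0.
  have := Rmax_l (m - d / 2) 0; have := Rmax_r (m - d / 2) 0.
  have : s < m by apply: Rmax_lub_lt; lra.
  rewrite -/s => s_m s_ge0 s_d; apply: (disj s); first lra.
    by apply: P_below; lra.
  by apply: Q_near; [lra | rewrite Rabs_left; lra].
Qed.

Section StarShaped.
Variable n : nat.
Implicit Types x : Cn n.
Local Notation cO := (@cn_zero n).

Lemma cn_dist_rscale t s x : cn_dist (cn_rscale t x) (cn_rscale s x) = Rabs (t - s) * cn_dist x cO.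
Proof.
rewrite !cn_dist_sqdist.
have -> : sqdist (cn_rscale t x) (cn_rscale s x) = (t - s) ^ 2 * sqdist x cO.
  rewrite /sqdist /sum_ord -sumR_mull; apply: sumR_ext => j.
  by rewrite /sqdist_at /cn_rscale /cn_zero /Cmult /=; ring.
rewrite sqrt_mult; [|exact: pow2_ge_0 | exact: sqdist_ge0].
by rewrite -Rsqr_pow2 sqrt_Rsqr_abs.
Qed.

Lemma cn_rscale0 x : cn_rscale 0 x = cO.
Proof.
apply: functional_extensionality => j; rewrite /cn_rscale /cn_zero /Cmult /=.
by apply: injective_projections => /=; ring.
Qed.

Lemma cn_rscale1 x : cn_rscale 1 x = x.
Proof.
apply: functional_extensionality => j; rewrite /cn_rscale /Cmult /=.
by apply: injective_projections => /=; ring.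
Qed.

Lemma open_segment_preimage (U : Cn n -> Prop) x t : cn_open U -> U (cn_rscale t x) ->
  exists d, 0 < d /\ forall s, 0 <= s <= 1 -> Rabs (s - t) < d -> U (cn_rscale s x).
Proof.
move=> U_open Utx; have [e [e_gt0 U_near]] := U_open _ Utx.
have x_ge0 := cn_dist_ge0 x cO.
exists (e / (cn_dist x cO + 1)); split; first by apply: Rdiv_lt_0_compat; lra.
move=> s _ st; apply: U_near; rewrite cn_dist_rscale Rabs_minus_sym.
apply: (Rle_lt_trans _ (Rabs (s - t) * (cn_dist x cO + 1))); first by have := Rabs_pos (s - t); nra.
have := Rmult_lt_compat_r (cn_dist x cO + 1) _ _ ltac:(lra) st.
by rewrite /Rdiv Rmult_assoc Rinv_l ?Rmult_1_r; lra.
Qed.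

Lemma star_shaped_connected (D : Cn n -> Prop) :
  D cO -> (forall x t, 0 <= t <= 1 -> D x -> D (cn_rscale t x)) -> cn_connected D.
Proof.
move=> DO D_star U V U_open V_open cover disj [x [Dx Ux]] [y [Dy Vy]].
case: (cover _ DO) => [UO|VO].
- apply: (unit_interval_connected (Pp := fun t => U (cn_rscale t y)) (Qq := fun t => V (cn_rscale t y)))
    => [t t01|t t01|t _|t _||]; rewrite ?cn_rscale0 ?cn_rscale1 //.
  + exact: cover (D_star _ _ t01 Dy).
  + exact: disj (D_star _ _ t01 Dy).
  + exact: open_segment_preimage.
  + exact: open_segment_preimage.
- apply: (unit_interval_connected (Pp := fun t => V (cn_rscale t x)) (Qq := fun t => U (cn_rscale t x)))
    => [t t01|t t01 Vt Ut|t _|t _||]; rewrite ?cn_rscale0 ?cn_rscale1 //.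
  + by case: (cover _ (D_star _ _ t01 Dx)); auto.
  + exact: disj (D_star _ _ t01 Dx) Ut Vt.
  + exact: open_segment_preimage.
  + exact: open_segment_preimage.
Qed.

End StarShaped.

Section ModelDomain.
Variable n : nat.
Implicit Types x Q : Cn n.
Local Notation cO := (@cn_zero n).

Lemma rho_domain_open P Q : cn_open (rho_domain P Q).
Proof.
move=> x; rewrite /rho_domain => rho_x.
have [d [d_gt0 near_x]] := cn_continuous_rho P Q x (eps := 1 - rho P Q x) ltac:(lra).
by exists d; split => // w xw; have /Rabs_def2 := near_x w xw; lra.
Qed.

Lemma rho_origin_rscale Q t x : rho cO Q (cn_rscale t x) = t ^ 2 * rho cO Q x.
Proof.
rewrite /rho.
have -> : sqdist (cn_rscale t x) cO = t ^ 2 * sqdist x cO.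
  rewrite /sqdist /sum_ord -sumR_mull; apply: sumR_ext => j.
  by rewrite /sqdist_at /cn_rscale /cn_zero /Cmult /=; ring.
have -> : inner (cn_rscale t x) cO Q cO = t * inner x cO Q cO.
  rewrite /inner /sum_ord -sumR_mull; apply: sumR_ext => j.
  by rewrite /cn_rscale /cn_zero /Cmult /=; ring.
ring.
Qed.

Lemma rho_origin Q : rho cO Q cO = 0.
Proof. by have := rho_origin_rscale Q 0 cO; rewrite cn_rscale0 => ->; ring. Qed.

Lemma rho_domain_connected Q : cn_connected (rho_domain cO Q).
Proof.
apply: star_shaped_connected => [|x t t01]; rewrite /rho_domain ?rho_origin; first lra.
rewrite rho_origin_rscale => rho_x.
have : t ^ 2 <= 1 by nra.
by case: (Rle_lt_dec 0 (rho cO Q x)); have := pow2_ge_0 t; nra.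
Qed.

Lemma sum_ord_delta i v : sum_ord (fun j : 'I_n => if j == i then v else 0) = v.
Proof. by rewrite /sum_ord sumR_delta ?enum_uniq // mem_enum. Qed.

Definition unit_vec (i : 'I_n) : Cn n := fun j => if j == i then RtoC 1 else RtoC 0.

Lemma sqdist_unit_vec i : sqdist (unit_vec i) cO = 1.
Proof.
rewrite -(sum_ord_delta i 1); apply: sumR_ext => j.
by rewrite /sqdist_at /unit_vec /cn_zero; case: (j == i) => /=; ring.
Qed.

Variables i0 i1 : 'I_n.
Hypothesis i01 : i0 != i1.

Definition test_pt (a : R) : Cn n :=
  fun j => if j == i0 then RtoC a else if j == i1 then RtoC 1 else RtoC 0.

Lemma rho_test_pt a : rho cO (unit_vec i0) (test_pt a) = 3 - a ^ 2.
Proof.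
rewrite /rho.
have -> : sqdist (test_pt a) cO = a ^ 2 + 1.
  rewrite -(sum_ord_delta i0 (a ^ 2)) -(sum_ord_delta i1 1) /sum_ord -sumR_add.
  apply: sumR_ext => j; rewrite /sqdist_at /test_pt /cn_zero.
  case: (eqVneq j i0) => [->|_]; first by rewrite (negbTE i01) /=; ring.
  by case: (j == i1) => /=; ring.
have -> : inner (test_pt a) cO (unit_vec i0) cO = a.
  transitivity (sum_ord (fun j => if j == i0 then a else 0)); last exact: sum_ord_delta.
  apply: sumR_ext => j.
  rewrite /test_pt /unit_vec /cn_zero; case: (j == i0) => /=; first ring.
  by case: (j == i1) => /=; ring.
ring.
Qed.

Lemma rho_domain_nonconvex : ~ cn_convex (rho_domain cO (unit_vec i0)).
Proof.
move=> convex.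
have := convex (test_pt 2) (test_pt (-2)) (/ 2); rewrite /rho_domain !rho_test_pt.
have -> : cn_add (cn_rscale (1 - / 2) (test_pt 2)) (cn_rscale (/ 2) (test_pt (-2))) = test_pt 0.
  apply: functional_extensionality => j; rewrite /cn_add /cn_rscale /test_pt /Cplus /Cmult.
  by case: (j == i0); case: (j == i1); apply: injective_projections => /=; field.
by rewrite rho_test_pt; lra.
Qed.

End ModelDomain.

Lemma inv_succ_small eps : 0 < eps ->
  exists N : nat, forall k : nat, (k >= N)%coq_nat -> / (INR k + 1) < eps.
Proof.
move=> eps_gt0; have [N [N_eps N_gt0]] := archimed_cor1 eps eps_gt0.
exists N => k kN; apply: Rle_lt_trans N_eps.
apply: Rinv_le_contravar; first by apply: lt_0_INR.
by have := le_INR _ _ kN; lra.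
Qed.

Lemma sumR_eventually_small T (l : seq T) (g : T -> nat -> R) :
  (forall j eps, 0 < eps -> exists N : nat, forall k, (k >= N)%coq_nat -> g j k < eps) ->
  forall eps, 0 < eps ->
  exists N : nat, forall k, (k >= N)%coq_nat -> sumR l (fun j => g j k) < eps.
Proof.
move=> g_small; elim: l => [|a l IH] eps eps_gt0.
  by exists 0%nat => k _; rewrite /sumR /=.
have [N1 g_a] := g_small a (eps / 2) ltac:(lra).
have [N2 g_l] := IH (eps / 2) ltac:(lra).
exists (Nat.max N1 N2) => k kN; rewrite sumR_cons.
by have := g_a k ltac:(lia); have := g_l k ltac:(lia); lra.
Qed.

Lemma Un_cv_sq_small u l : Un_cv u l ->
  forall e, 0 < e -> exists N : nat, forall k, (k >= N)%coq_nat -> (l - u k) ^ 2 < e.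
Proof.
move=> u_cv e e_gt0; have [N near] := u_cv (sqrt e) (sqrt_lt_R0 e e_gt0).
exists N => k kN; rewrite -(pow2_sqrt e); last lra.
rewrite -!Rsqr_pow2; apply: Rsqr_lt_abs_1.
by rewrite Rabs_minus_sym (Rabs_right (sqrt e)); [exact: near | apply: Rle_ge; exact: sqrt_pos].
Qed.

Section ClosedImage.
Variable n : nat.
Implicit Types x y w a b : Cn n.
Implicit Types K : Cn n -> Prop.

Definition cn_adherent K x := forall eps, 0 < eps -> exists w, K w /\ cn_dist x w < eps.

Lemma cn_closed_adherent K : (forall x, cn_adherent K x -> K x) -> cn_closed K.
Proof.
move=> K_adh x notKx; apply: NNPP => no_ball; apply/notKx/K_adh => eps eps_gt0.
apply: NNPP => none; apply: no_ball; exists eps; split => // w xw Kw.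
by apply: none; exists w.
Qed.

Lemma adherent_le (f : Cn n -> R) K x alpha :
  cn_continuous_at f x -> (forall w, K w -> f w <= alpha) -> cn_adherent K x -> f x <= alpha.
Proof.
move=> f_cont f_le x_adh; apply: Rnot_lt_le => alpha_lt.
have [d [d_gt0 near_x]] := f_cont (f x - alpha) ltac:(lra).
have [w [Kw xw]] := x_adh d d_gt0.
by have := near_x w xw; have := f_le w Kw; move=> ? /Rabs_def2; lra.
Qed.

Lemma coord_le_cn_dist a b j :
  Rabs (fst (a j) - fst (b j)) <= cn_dist a b /\ Rabs (snd (a j) - snd (b j)) <= cn_dist a b.
Proof.
have ab_j : sqdist_at a b j <= sqdist a b by apply: sumR_ge_term (mem_enum _ j); exact: sqdist_at_ge0.
have := pow2_ge_0 (fst (a j) - fst (b j)); have := pow2_ge_0 (snd (a j) - snd (b j)).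
rewrite cn_dist_sqdist /sqdist_at in ab_j * => ? ?.
by split; rewrite -sqrt_Rsqr_abs; apply: sqrt_le_1_alt; rewrite Rsqr_pow2; lra.
Qed.

Lemma cn_dist_eq0 a b : cn_dist a b = 0 -> a = b.
Proof.
move=> ab0; apply: functional_extensionality => j.
have [fst_ab snd_ab] := coord_le_cn_dist a b j; rewrite ab0 in fst_ab snd_ab.
have := Rabs_pos (fst (a j) - fst (b j)); have := Rabs_pos (snd (a j) - snd (b j)) => ? ?.
apply: injective_projections; apply: Rminus_diag_uniq; apply: Rabs_eq_0; lra.
Qed.

Lemma cn_cauchy_cvg (xs : nat -> Cn n) :
  (forall eps, 0 < eps -> exists N : nat, forall k l,
     (k >= N)%coq_nat -> (l >= N)%coq_nat -> cn_dist (xs k) (xs l) < eps) ->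
  exists x, forall eps, 0 < eps ->
    exists N : nat, forall k, (k >= N)%coq_nat -> cn_dist x (xs k) < eps.
Proof.
move=> cauchy.
have coord_lim (c : C -> R) : (forall a b j, Rabs (c (a j) - c (b j)) <= cn_dist a b) ->
    forall j, {l | Un_cv (fun k => c (xs k j)) l}.
  move=> c_le j; apply: Rcomplete.R_complete => eps eps_gt0.
  have [N near] := cauchy eps eps_gt0; exists N => k l kN lN.
  by have := c_le (xs k) (xs l) j; have := near k l kN lN; rewrite /Rdist; lra.
have [fst_lim snd_lim] :=
  (coord_lim fst (fun a b j => proj1 (coord_le_cn_dist a b j)),
   coord_lim snd (fun a b j => proj2 (coord_le_cn_dist a b j))).
pose x : Cn n := fun j => (proj1_sig (fst_lim j), proj1_sig (snd_lim j)).
exists x => eps eps_gt0.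
have sqdist_small : forall j e, 0 < e ->
    exists N : nat, forall k, (k >= N)%coq_nat -> sqdist_at x (xs k) j < e.
  move=> j e e_gt0; rewrite /sqdist_at /x /=.
  case: (fst_lim j) (snd_lim j) => [l1 cv1] [l2 cv2] /=.
  have [N1 near1] := Un_cv_sq_small cv1 (e := e / 2) ltac:(lra).
  have [N2 near2] := Un_cv_sq_small cv2 (e := e / 2) ltac:(lra).
  exists (Nat.max N1 N2) => k kN.
  by have := near1 k ltac:(lia); have := near2 k ltac:(lia); lra.
have [N near] := sumR_eventually_small (enum 'I_n) sqdist_small (pow_lt eps 2 eps_gt0).
exists N => k kN; rewrite cn_dist_sqdist -(sqrt_pow2 eps); last lra.
by apply: sqrt_lt_1_alt; split; [exact: sqdist_ge0 | exact: near].
Qed.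

(* The preimages of points of A(K) approaching y form a Cauchy sequence, since A
   preserves distances; its limit lies in K and is mapped to y. *)
Lemma isometry_image_adherent (A : Cn n -> Cn n) K : real_isometry A ->
  (forall x, cn_adherent K x -> K x) ->
  forall y, cn_adherent (cn_image A K) y -> cn_image A K y.
Proof.
move=> isoA K_closed y y_adh.
have approx (k : nat) : exists x, K x /\ cn_dist y (A x) < / (INR k + 1).
  have [_ [[x [Kx ->]] yAx]] := y_adh _ (RinvN_pos k).
  by exists x.
have [xs xs_spec] := choice _ approx.
have [x x_lim] : exists x, forall eps, 0 < eps ->
    exists N : nat, forall k, (k >= N)%coq_nat -> cn_dist x (xs k) < eps.
  apply: cn_cauchy_cvg => eps eps_gt0.
  have [N small] := inv_succ_small (eps := eps / 2) ltac:(lra).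
  exists N => k l kN lN; rewrite -isoA.
  have := cn_dist_triangle (A (xs k)) y (A (xs l)); rewrite (cn_dist_sym _ y).
  have := proj2 (xs_spec k); have := proj2 (xs_spec l).
  by have := small k kN; have := small l lN; lra.
exists x; split.
  apply: K_closed => eps eps_gt0; have [N near] := x_lim eps eps_gt0.
  by exists (xs N); split; [exact: proj1 (xs_spec N) | apply: near; lia].
apply: esym; apply: cn_dist_eq0; apply: Rle_antisym; last exact: cn_dist_ge0.
apply: Rnot_lt_le => d_gt0; set d := cn_dist (A x) y in d_gt0.
have [N1 near1] := x_lim (d / 2) ltac:(lra).
have [N2 near2] := inv_succ_small (eps := d / 2) ltac:(lra).
have := cn_dist_triangle (A x) (A (xs (Nat.max N1 N2))) y; rewrite isoA.
have := near1 _ (Nat.le_max_l N1 N2); have := near2 _ (Nat.le_max_r N1 N2).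
by have := proj2 (xs_spec (Nat.max N1 N2)); rewrite (cn_dist_sym y) -/d; lra.
Qed.

End ClosedImage.

Lemma exhaust_sublevel (n : nat) (P Q x : Cn n) c : rho P Q x < 1 -> exhaust P Q x < c ->
  rho P Q x <= 1 - / Rmax c 1 /\ cn_dist x P <= Rmax c 1.
Proof.
rewrite /exhaust sqdist_cn_dist => rho_x exhaust_x.
have c_le := Rmax_l c 1; have one_le := Rmax_r c 1.
have inv_gt0 : 0 < / (1 - rho P Q x) by apply: Rinv_0_lt_compat; lra.
have := pow2_ge_0 (cn_dist x P); have := cn_dist_ge0 x P => ? ?.
split; last by nra.
have : / c < 1 - rho P Q x.
  rewrite -(Rinv_inv (1 - rho P Q x)); apply: Rinv_lt_contravar; [apply: Rmult_lt_0_compat|]; lra.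
have : / Rmax c 1 <= / c by apply: Rinv_le_contravar; lra.
lra.
Qed.

Lemma isometry_image_exhaustion (n : nat) (A : Cn n -> Cn n) (P Q : Cn n) : real_isometry A ->
  exhaustion_on (cn_image A (rho_domain P Q)) (exhaust (A P) (A Q)).
Proof.
move=> isoA c; pose K x := rho P Q x <= 1 - / Rmax c 1 /\ cn_dist x P <= Rmax c 1.
have inv_gt0 : 0 < / Rmax c 1 by apply: Rinv_0_lt_compat; have := Rmax_r c 1; lra.
exists (cn_image A K); split; [|split; [|split]].
- apply/cn_closed_adherent/isometry_image_adherent => // x x_adh; split.
    by apply: adherent_le x_adh => [|w []//]; exact: cn_continuous_rho.
  by apply: (adherent_le (f := fun w => cn_dist w P)) x_adh => [|w []//]; exact: cn_continuous_dist.
- exists (cn_dist (@cn_zero n) (A P) + Rmax c 1) => _ [x [[_ xP] ->]].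
  by have := cn_dist_triangle (@cn_zero n) (A P) (A x); rewrite isoA (cn_dist_sym P); lra.
- by move=> _ [x [[rho_x _] ->]]; exists x; split => //; rewrite /rho_domain; lra.
- move=> _ [x [rho_x ->]]; rewrite /exhaust isometry_rho // isometry_sqdist // => exhaust_x.
  by exists x; split => //; exact: exhaust_sublevel.
Qed.

Theorem proposition3p2 (n : nat) (hn : (2 <= n)%nat) :
  exists D : Cn n -> Prop,
    cn_domain D /\ ~ cn_convex D /\
    forall A : Cn n -> Cn n, real_isometry A -> pseudoconvex (cn_image A D).
Proof.
pose i0 : 'I_n := Ordinal (ltnW hn); pose i1 : 'I_n := Ordinal hn.
exists (rho_domain (@cn_zero n) (unit_vec i0)); split; [split; [|split] | split].
- by exists (@cn_zero n); rewrite /rho_domain rho_origin; lra.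
- exact: rho_domain_open.
- exact: rho_domain_connected.
- exact: (@rho_domain_nonconvex _ i0 i1).
move=> A isoA; exists (exhaust (A (@cn_zero n)) (A (unit_vec i0))); split.
  apply: exhaust_cont_psh => [|_ [x [rho_x ->]]].
    by rewrite (isometry_sqdist isoA) sqdist_unit_vec.
  by rewrite (isometry_rho isoA).
exact: isometry_image_exhaustion.
Qed.
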